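(* Let $1\le s\le d/2$ and $n\ge d+1$, and let $\mathcal F\subseteq\binom{[n]}{d+1}$ be an $s$-witness family, where for each $F\in\mathcal F$ a witness $B_F\subseteq F$ with $|B_F|=s$ (so that $F\cap F'\ne B_F$ for all $F'\in\mathcal F$) has been fixed. Let $\mathcal B=\{B\in\binom{[n]}{s}: \exists F\in\mathcal F \text{ with } B_F=B\}$. Then there is a constant $C_d$ depending only on $d$ such that for every $B\in\mathcal B$ there exists a family $\mathcal A_B$ of subsets of $[n]\setminus B$, each of size at most $d+1-s$, satisfying: (1) $\mathcal A_B$ is intersecting, i.e. $A\cap A'\neq\varnothing$ for all $A,A'\in\mathcal A_B$; (2) for every $F\in\mathcal F$ with $B_F=B$, there exists $A\in\mathcal A_B$ with $A\subseteq F$; (3) for every $F\in\mathcal F$ with $B\subseteq F$ (possibly $B_F\ne B$), we have $A\cap F\neq\varnothing$ for all $A\in\mathcal A_B$; (4) $|\mathcal A_B|\le C_d$.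
   Context: $[n]=\{1,\dots,n\}$ and $\binom{[n]}{k}$ denotes the family of all $k$-element subsets of $[n]$. For $n\ge d+1$ and $0\le s\le d$, a family $\mathcal F\subseteq\binom{[n]}{d+1}$ is an $s$-witness family if for every $F\in\mathcal F$ there exists $B_F\subseteq F$ with $|B_F|=s$ such that $F\cap F'\neq B_F$ for every $F'\in\mathcal F$; such $B_F$ is called a witness of $F$. *)

From mathcomp Require Import all_boot.
Set Implicit Arguments. Unset Strict Implicit. Unset Printing Implicit Defensive.

(* [n] is modelled by 'I_n (elements 0..n-1); subsets of [n] are {set 'I_n}. *)

Definition witness_assignment (n d s : nat) (Fam : {set {set 'I_n}})
  (Bf : {set 'I_n} -> {set 'I_n}) : Prop :=
  forall F, F \in Fam ->
    [/\ Bf F \subset F, #|Bf F| = s &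
        forall F', F' \in Fam -> F :&: F' != Bf F].

Definition uniform_family (n k : nat) (Fam : {set {set 'I_n}}) : Prop :=
  forall F, F \in Fam -> #|F| = k.

Definition s_witness_family (n d s : nat) (Fam : {set {set 'I_n}}) : Prop :=
  uniform_family (d.+1) Fam /\
  exists Bf, witness_assignment d s Fam Bf.

From mathcomp Require Import all_boot.
Set Implicit Arguments. Unset Strict Implicit. Unset Printing Implicit Defensive.

(* Fix a witness B and start from the link sets F \ B of the members F with
   B_F = B.  If B_F = B and B is contained in a member F', then F :&: F' contains
   B and differs from it, so F \ B meets F' \ B; hence every link set meets
   every other link set and every member of the star of B.  Shrinking link sets
   one at a time while keeping this property (the total size decreases) ends in
   a family whose members are minimal transversals of the hypergraph formed by
   the family and the star.  Its edges have at most d+1 vertices, and a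
   hypergraph with edges of size at most r has at most r^m minimal transversals
   of size at most m: each one is produced by m rounds of picking one of the r
   vertices of the first edge it does not yet meet. *)

Definition transversal (T : finType) (E : {set {set T}}) (S : {set T}) : bool :=
  [forall e in E, S :&: e != set0].

Lemma transversalP (T : finType) (E : {set {set T}}) (S : {set T}) :
  reflect {in E, forall e, S :&: e != set0} (transversal E S).
Proof. exact: forall_inP. Qed.

Lemma transversalU (T : finType) (E1 E2 : {set {set T}}) (S : {set T}) :
  transversal (E1 :|: E2) S = transversal E1 S && transversal E2 S.
Proof.
apply/transversalP/andP => [hit | [/transversalP hit1 /transversalP hit2] e].
  by split; apply/transversalP => e eE; apply: hit; rewrite inE eE ?orbT.
by rewrite inE => /orP[]; [apply: hit1 | apply: hit2].
Qed.

Lemma transversal1 (T : finType) (e S : {set T}) :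
  transversal [set e] S = (S :&: e != set0).
Proof.
apply/transversalP/idP => [hit | hit e']; first by apply: hit; rewrite set11.
by rewrite inE => /eqP ->.
Qed.

Lemma transversal_sub (T : finType) (E1 E2 : {set {set T}}) (S : {set T}) :
  E1 \subset E2 -> transversal E2 S -> transversal E1 S.
Proof.
move=> sE12 /transversalP hit; apply/transversalP => e eE1.
exact/hit/(subsetP sE12).
Qed.

(* The letter [c] adds the [c]-th element (in [enum] order) of the first edge
   missed by [S]; nothing is added if that edge has at most [c] elements. *)
Definition decode_step (T : finType) r (E : {set {set T}}) (S : {set T}) (c : 'I_r) :=
  if [pick e in E | S :&: e == set0] is Some e
  then S :|: [set x in e | index x (enum e) == c] else S.

Definition decode (T : finType) r (E : {set {set T}}) (code : seq 'I_r) :=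
  foldl (decode_step E) set0 code.

Lemma decode_step_transversal (T : finType) r (E : {set {set T}}) S (c : 'I_r) :
  transversal E S -> decode_step E S c = S.
Proof.
move=> /transversalP hit; rewrite /decode_step.
by case: pickP => // e /andP[eE /eqP Se0]; have := hit e eE; rewrite Se0 eqxx.
Qed.

Lemma decode_step_grow (T : finType) r (E : {set {set T}}) (S U : {set T}) :
  {in E, forall e : {set T}, #|e| <= r} -> transversal E U -> S \subset U ->
  ~~ transversal E S ->
  exists c : 'I_r, S \proper decode_step E S c /\ decode_step E S c \subset U.
Proof.
move=> small /transversalP hitU sSU.
rewrite /decode_step.
case: pickP => [e /andP[eE /eqP Se0] _ | missed /transversalP[e eE]]; last first.
  by have := missed e; rewrite eE /= => /negbT.
have [y /setIP[yU ye]] := set0Pn _ (hitU e eE).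
have yr : index y (enum e) < r.
  by apply: leq_trans (small e eE); rewrite cardE index_mem mem_enum.
exists (Ordinal yr).
have -> : [set x in e | index x (enum e) == Ordinal yr] = [set y].
  apply/setP => x; rewrite !inE.
  apply/andP/eqP => [[xe /eqP eq_idx] | ->]; last by rewrite ye /=.
  by rewrite -(nth_index x (_ : x \in enum e)) ?mem_enum // eq_idx nth_index ?mem_enum.
have yS : y \notin S.
  apply/negP => yS; have : y \in S :&: e by rewrite inE yS.
  by rewrite Se0 inE.
by rewrite properUl ?sub1set // subUset sub1set yU sSU.
Qed.

Lemma decode_within_transversal (T : finType) r (E : {set {set T}}) (U : {set T}) m :
  {in E, forall e : {set T}, #|e| <= r.+1} -> transversal E U ->
  exists code : seq 'I_r.+1, [/\ size code = m, decode E code \subset U &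
    transversal E (decode E code) \/ m <= #|decode E code|].
Proof.
move=> small hitU; elim: m => [|m [code [size_code sub_code grow_code]]].
  by exists [::]; split; [| apply: sub0set | right].
have decode_rcons c : decode E (rcons code c) = decode_step E (decode E code) c.
  by rewrite /decode foldl_rcons.
have [hit_code | miss_code] := boolP (transversal E (decode E code)).
  exists (rcons code ord0).
  rewrite size_rcons size_code decode_rcons decode_step_transversal //.
  by split=> //; left.
have le_m : m <= #|decode E code| by case: grow_code => // hit; rewrite hit in miss_code.
have [c [grow sub]] := decode_step_grow small hitU sub_code miss_code.
exists (rcons code c); rewrite size_rcons size_code decode_rcons; split=> //; right.
exact: leq_ltn_trans le_m (proper_card grow).
Qed.

Lemma minimal_transversal_decode (T : finType) r (E : {set {set T}}) (U : {set T}) m :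
  {in E, forall e : {set T}, #|e| <= r.+1} -> minset (transversal E) U -> #|U| <= m ->
  exists2 code : seq 'I_r.+1, size code = m & decode E code = U.
Proof.
move=> small /minsetP[hitU minU] le_U_m.
have [code [size_code sub_code [hit_code | le_m]]] :=
  decode_within_transversal m small hitU.
  by exists code => //; apply: minU.
exists code => //; apply/eqP; rewrite eqEcard sub_code.
exact: leq_trans le_U_m le_m.
Qed.

Lemma card_minimal_transversals (T : finType) r (E : {set {set T}}) m :
  {in E, forall e : {set T}, #|e| <= r.+1} ->
  #|[set U | minset (transversal E) U & #|U| <= m]| <= r.+1 ^ m.
Proof.
move=> small.
have sub_decoded : [set U | minset (transversal E) U & #|U| <= m]
    \subset [set decode E (tval code) | code : m.-tuple 'I_r.+1].
  apply/subsetP => U; rewrite inE => /andP[minU le_U_m].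
  have [code /eqP size_code <-] := minimal_transversal_decode small minU le_U_m.
  by apply/imsetP; exists (Tuple size_code).
apply: leq_trans (subset_leq_card sub_decoded) _.
by apply: leq_trans (leq_imset_card _ _) _; rewrite card_tuple card_ord.
Qed.

Lemma transversal_replace (T : finType) (G K : {set {set T}}) (A S : {set T}) :
  {in K, forall X, transversal (K :|: G) X} -> A \in K -> S \subset A ->
  transversal (K :|: G) S ->
  {in S |: (K :\ A), forall X, transversal ((S |: (K :\ A)) :|: G) X}.
Proof.
move=> hitK AK sSA hitS X XK'.
have hitS_K Y : Y \in K -> S :&: Y != set0.
  by move=> YK; move/transversalP: hitS; apply; rewrite inE YK.
have S_neq0 : S != set0 by have := hitS_K A AK; rewrite (setIidPl sSA).
apply: (@transversal_sub _ _ (S |: (K :|: G))).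
  by rewrite -setUA; apply/setUS/setSU/subD1set.
rewrite transversalU transversal1.
case/setU1P: XK' => [-> | /setD1P[_ XK]]; first by rewrite setIid S_neq0.
by rewrite setIC hitS_K ?hitK.
Qed.

Lemma sum_card_replace (T : finType) (K : {set {set T}}) (A S : {set T}) :
  A \in K -> S \proper A ->
  \sum_(X in S |: (K :\ A)) #|X| < \sum_(X in K) #|X|.
Proof.
move=> AK ltSA; rewrite (big_setD1 A AK) /=.
have ltSA_card := proper_card ltSA.
have [SK | SnK] := boolP (S \in K :\ A).
  rewrite (setUidPr _) ?sub1set // -[X in X < _]add0n ltn_add2r.
  exact: leq_ltn_trans (leq0n _) ltSA_card.
by rewrite big_setU1 //= ltn_add2r.
Qed.

Lemma minimal_transversal_refinement (T : finType) (G K : {set {set T}}) :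
  {in K, forall A, transversal (K :|: G) A} ->
  exists K' : {set {set T}},
    [/\ {in K', forall A' : {set T}, exists2 A, A \in K & A' \subset A},
        {in K, forall A : {set T}, exists2 A', A' \in K' & A' \subset A}
      & {in K', forall A', minset (transversal (K' :|: G)) A'}].
Proof.
have [m] := ubnP (\sum_(X in K) #|X|).
elim: m K => // m IH K lt_sum hitK.
have [all_min | /forall_inPn[A AK notminA]] :=
  boolP [forall (A | A \in K), minset (transversal (K :|: G)) A].
  exists K; split=> [A' A'K | A AK | A AK]; [exists A' | exists A |] => //.
  exact: (forall_inP all_min).
have [S minS sSA] := minset_exists (hitK A AK).
have ltSA : S \proper A.
  by rewrite properEneq sSA andbT; apply: contraNneq notminA => <-.
have [|K' [sub_K' sub_K min_K']] := IH (S |: (K :\ A)) _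
    (transversal_replace hitK AK sSA (minsetp minS)).
  exact: leq_trans (sum_card_replace AK ltSA) _.
exists K'; split=> // [A' A'K' | X XK].
  have [Y + sA'Y] := sub_K' A' A'K'; case/setU1P => [eqYS | /setD1P[_ YK]].
    by exists A => //; rewrite (subset_trans sA'Y) // eqYS.
  by exists Y.
have [eqXA | neqXA] := eqVneq X A.
  have [A' A'K' sA'S] := sub_K S (setU11 _ _).
  by exists A' => //; rewrite eqXA (subset_trans sA'S).
by apply: sub_K; rewrite setU1r // in_setD1 neqXA.
Qed.

Definition star n (Fam : {set {set 'I_n}}) (B : {set 'I_n}) :=
  [set F in Fam | B \subset F].

Definition witness_link n (Fam : {set {set 'I_n}}) (Bf : {set 'I_n} -> {set 'I_n})
    (B : {set 'I_n}) :=
  [set F :\: B | F in [set F in Fam | Bf F == B]].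

Lemma witness_setI_setD_neq0 n d s (Fam : {set {set 'I_n}}) Bf (F1 F : {set 'I_n}) :
  witness_assignment d s Fam Bf -> F1 \in Fam -> F \in Fam -> Bf F1 \subset F ->
  (F1 :&: F) :\: Bf F1 != set0.
Proof.
move=> wit F1Fam FFam sBF; have [sBF1 _ neqB] := wit F1 F1Fam.
rewrite setD_eq0; apply: contra (neqB F FFam) => sF1FB.
by rewrite eqEsubset sF1FB subsetI sBF1 sBF.
Qed.

Lemma witness_link_transversal n d s (Fam : {set {set 'I_n}}) Bf (B : {set 'I_n}) :
  witness_assignment d s Fam Bf ->
  {in witness_link Fam Bf B, forall A,
    transversal (witness_link Fam Bf B :|: star Fam B) A}.
Proof.
move=> wit _ /imsetP[F1 + ->]; rewrite inE => /andP[F1Fam /eqP BF1].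
have meet F : F \in Fam -> B \subset F -> (F1 :&: F) :\: B != set0.
  by move=> FFam; rewrite -BF1; apply: witness_setI_setD_neq0 wit F1Fam FFam.
rewrite transversalU; apply/andP; split; apply/transversalP.
  move=> _ /imsetP[F + ->]; rewrite inE => /andP[FFam /eqP BF].
  have [sBF _ _] := wit F FFam.
  by rewrite -setDIl meet // -BF.
by move=> F; rewrite inE => /andP[FFam sBF]; rewrite setIDAC meet.
Qed.

Lemma witness_link_card n d s (Fam : {set {set 'I_n}}) Bf (B : {set 'I_n}) :
  uniform_family d.+1 Fam -> witness_assignment d s Fam Bf ->
  {in witness_link Fam Bf B, forall A : {set 'I_n}, A \subset ~: B /\ #|A| = d.+1 - s}.
Proof.
move=> unif wit _ /imsetP[F + ->]; rewrite inE => /andP[FFam /eqP BF].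
have [sBF cardB _] := wit F FFam.
split; first exact: subsetDr.
by rewrite cardsD (setIidPr _) -BF ?cardB ?unif.
Qed.

Theorem lemma2p2 (d : nat) :
  exists C : nat,
  forall (s n : nat) (Fam : {set {set 'I_n}}) (Bf : {set 'I_n} -> {set 'I_n}),
    1 <= s -> s.*2 <= d -> d.+1 <= n ->
    uniform_family d.+1 Fam ->
    witness_assignment d s Fam Bf ->
    forall B : {set 'I_n},
      (exists2 F, F \in Fam & Bf F = B) ->
      exists AB : {set {set 'I_n}},
        [/\ forall A, A \in AB -> A \subset ~: B /\ #|A| <= d.+1 - s,
            forall A A', A \in AB -> A' \in AB -> A :&: A' != set0,
            forall F, F \in Fam -> Bf F = B -> exists2 A, A \in AB & A \subset F,
            forall F, F \in Fam -> B \subset F ->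
              forall A, A \in AB -> A :&: F != set0
          & #|AB| <= C].
Proof.
(* Neither [s.*2 <= d], [d.+1 <= n] nor [B] being a witness is needed. *)
exists (d.+1 ^ d) => s n Fam Bf s_gt0 _ _ unif wit B _.
have [K [sub_link sub_K min_K]] :=
  minimal_transversal_refinement (witness_link_transversal (B := B) wit).
have small_K : {in K, forall A : {set 'I_n}, A \subset ~: B /\ #|A| <= d.+1 - s}.
  move=> A AK; have [A0 /(witness_link_card unif wit)[sA0B <-] sAA0] := sub_link A AK.
  by rewrite (subset_trans sAA0) ?subset_leq_card.
have hit_K A : A \in K -> transversal K A && transversal (star Fam B) A.
  by move=> AK; rewrite -transversalU (minsetp (min_K A AK)).
exists K; split=> //.
- by move=> A A' AK; case/andP: (hit_K A AK) => /transversalP hit _; apply: hit.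
- move=> F FFam BF; have [|A AK sAF] := sub_K (F :\: B).
    by apply: imset_f; rewrite inE FFam BF eqxx.
  by exists A; rewrite // (subset_trans sAF) ?subsetDl.
- move=> F FFam sBF A AK; case/andP: (hit_K A AK) => _ /transversalP hit.
  by apply: hit; rewrite inE FFam.
apply: leq_trans (@card_minimal_transversals _ d (K :|: star Fam B) d _) => [|e].
  apply/subset_leq_card/subsetP => A AK; rewrite inE min_K //=.
  have [_ le_A] := small_K A AK; apply: leq_trans le_A _.
  by rewrite leq_subLR addnC -addn1 leq_add2l.
rewrite !inE => /orP[eK | /andP[eFam _]]; last by rewrite unif.
by have [_ le_e] := small_K e eK; rewrite (leq_trans le_e) ?leq_subr.
Qed.
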